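(* For every integer $n\ge0$, $$\sum_{k=0}^n\frac{\binom{2n+1}{k}(-1)^k}{k-(2n+1)}=-\frac34\sum_{k=1}^n\frac{\binom{2k}{k}(-1)^k}{k}-\sum_{k=0}^n\frac{\binom{2k}{k}(-1)^k}{2k+1}.$$ *)

From mathcomp Require Import all_boot all_order all_algebra.

From mathcomp Require Import all_boot all_order all_algebra.
From mathcomp Require Import ring zify.
Import GRing.Theory Num.Theory.
Local Open Scope ring_scope.

(* Write [M = 2n+1].  The left-hand side is, up to sign,
   A(M, n) = sum_(k<=n) C(M,k) (-1)^k / (M - k).  Splitting C(M,k) by Pascal's
   rule and using the partial alternating sums
   sum_(k<=j) (-1)^k C(q+1,k) = (-1)^j C(q,j), one gets the recursion
   A(p+j+1, j) = (-1)^j * sum_(l<=j) C(p+l,l)/(p+l+1) =: (-1)^j * B(p,j),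
   so the left-hand side equals -(-1)^n W(n) with W(n) = B(n,n).
   The sums W(n) satisfy a first-order recurrence, obtained by telescoping
   the Wilf-Zeilberger pair F(n+1,l) + F(n,l) = G(n,l+1) - G(n,l):
     W(n+1) + W(n) = (3/(4(n+1)) + 1/(2n+3)) C(2n+2,n+1).
   The right-hand side T(n) satisfies the matching recurrence
     T(n+1) = T(n) + (-1)^n (3/(4(n+1)) + 1/(2n+3)) C(2n+2,n+1),
   so -(-1)^n W(n) = T(n) follows by induction on n. *)

Lemma alternating_binomial_partial_sum (R : comPzRingType) (q j : nat) :
  \sum_(0 <= k < j.+1) ('C(q.+1, k)%:R * (-1) ^+ k : R) = (-1) ^+ j * 'C(q, j)%:R.
Proof.
elim: j => [|j IH]; first by rewrite big_nat1 !bin0 expr0 mul1r.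
by rewrite big_nat_recr //= IH binS natrD exprS; ring.
Qed.

Section BinomialQuotients.
Variable R : numFieldType.

Let natS_neq0 (m : nat) : (m.+1%:R : R) != 0.
Proof. by rewrite pnatr_eq0. Qed.

Lemma binomial_quotient_pascal (M K : nat) : (K < M)%N ->
  'C(M.+1, K.+1)%:R * (-1) ^+ K.+1 / (M.+1%:R - K.+1%:R) =
  'C(M.+1, K.+1)%:R * (-1) ^+ K.+1 / M.+1%:R
   - 'C(M, K)%:R * (-1) ^+ K / (M%:R - K%:R) :> R.
Proof.
move=> ltKM.
have MK_neq0 : (M%:R - K%:R : R) != 0.
  by rewrite subr_eq0 eqr_nat neq_ltn ltKM orbT.
have shift : (M.+1%:R - K.+1%:R : R) = M%:R - K%:R by rewrite -!natr1; ring.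
have absorb : (M.+1%:R * 'C(M, K.+1)%:R = (M%:R - K%:R) * 'C(M.+1, K.+1)%:R :> R).
  have := mul_bin_down M.+1 K.+1; rewrite /= subSS => e.
  by rewrite -!natrM e natrM natrB // ltnW.
have pascal : ('C(M, K)%:R : R) = 'C(M.+1, K.+1)%:R - 'C(M, K.+1)%:R.
  by rewrite binS natrD; ring.
have down : ('C(M, K.+1)%:R : R) = (M%:R - K%:R) * 'C(M.+1, K.+1)%:R / M.+1%:R.
  by rewrite -absorb mulrAC divff // mul1r.
rewrite shift pascal down exprS; field.
by rewrite MK_neq0 addrC natr1 natS_neq0.
Qed.

Lemma alternating_binomial_quotient_sum (p j : nat) :
  \sum_(0 <= k < j.+1)
     ('C((p + j).+1, k)%:R * (-1) ^+ k / ((p + j).+1%:R - k%:R) : R)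
  = (-1) ^+ j * \sum_(0 <= l < j.+1) ('C(p + l, l)%:R / (p + l).+1%:R).
Proof.
elim: j p => [|j IH] p.
  by rewrite !big_nat1 !bin0 !addn0 expr0 subr0 !mul1r.
rewrite addnS big_nat_recl //.
rewrite (eq_big_nat _ _ (F2 := fun k =>
    'C((p + j).+2, k.+1)%:R * (-1) ^+ k.+1 / ((p + j).+2%:R : R)
    - 'C((p + j).+1, k)%:R * (-1) ^+ k / ((p + j).+1%:R - k%:R))); last first.
  by move=> k /andP[_ ltkj]; apply: binomial_quotient_pascal; lia.
rewrite sumrB IH -mulr_suml.
have row_sum : \sum_(0 <= i < j.+1) ('C((p + j).+2, i.+1)%:R * (-1) ^+ i.+1 : R)
    = (-1) ^+ j.+1 * 'C((p + j).+1, j.+1)%:R - 1.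
  have := alternating_binomial_partial_sum R (p + j).+1 j.+1.
  by rewrite big_nat_recl // bin0 expr0 mulr1 => <-; ring.
rewrite row_sum [X in _ = _ * X]big_nat_recr //= addnS bin0 expr0 subr0 exprS.
field.
have -> : (2 + (p%:R + j%:R) : R) = (p + j).+2%:R by rewrite -!natr1 natrD; ring.
exact: natS_neq0.
Qed.

Definition wz_summand (n l : nat) : R := 'C(n + l, l)%:R / (n + l).+1%:R.
Definition wz_certificate (n l : nat) : R :=
  wz_summand n l * (l%:R * (l%:R + 2 * n%:R + 2)) / (n%:R + 1) ^+ 2.

Definition wz_sum (n : nat) : R := \sum_(0 <= l < n.+1) wz_summand n l.

Lemma wz_pair (n l : nat) :
  wz_summand n.+1 l + wz_summand n l = wz_certificate n l.+1 - wz_certificate n l.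
Proof.
rewrite /wz_certificate /wz_summand addSn addnS.
set c := ('C(n + l, l)%:R : R).
have n1_neq0 : (n%:R + 1 : R) != 0 by rewrite natr1 natS_neq0.
have l1_neq0 : (l%:R + 1 : R) != 0 by rewrite natr1 natS_neq0.
have up_n : ('C((n + l).+1, l)%:R : R) = (n + l).+1%:R * c / (n%:R + 1).
  have := mul_bin_down (n + l).+1 l; rewrite /= subSn ?leq_addl // addnK => e.
  by rewrite /c -natrM e natrM -natr1; field.
have up_l : ('C((n + l).+1, l.+1)%:R : R)
    = (n%:R + 1) * 'C((n + l).+1, l)%:R / (l%:R + 1).
  have := mul_bin_left (n + l).+1 l; rewrite subSn ?leq_addl // addnK => e.
  by rewrite (natr1 n) -natrM -e natrM -natr1; field.
rewrite up_l up_n -!natr1 !natrD.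
field; by rewrite n1_neq0 l1_neq0 -!natrD !natr1 !natS_neq0.
Qed.

Definition step_term (n : nat) : R :=
  (3%:R / 4%:R / n.+1%:R + 1 / (2 * n.+1).+1%:R) * 'C(2 * n.+1, n.+1)%:R.

(* Telescoping the WZ pair gives the recurrence for W. *)
Lemma wz_sum_recurrence (n : nat) : wz_sum n.+1 + wz_sum n = step_term n.
Proof.
rewrite /wz_sum big_nat_recr //= addrAC -big_split /=.
rewrite (eq_bigr _ (fun l _ => wz_pair n l)) telescope_sumr //.
rewrite /step_term /wz_certificate /wz_summand mul2n -!addnn.
rewrite !addSn !addnS !addn0 bin0 mul0r mulr0 mul0r subr0.
have middle : 'C((n + n).+1, n.+1) = 'C((n + n).+1, n).
  have := mul_bin_left (n + n).+1 n; rewrite subSn ?leq_addl // addnK.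
  by move/eqP; rewrite eqn_mul2l => /eqP.
have central : 'C((n + n).+2, n.+1) = 2 * 'C((n + n).+1, n).
  by rewrite binS middle addnn -mul2n.
rewrite central middle natrM -!natr1 !natrD.
field; by rewrite -!natrD !natr1 !natS_neq0.
Qed.

Definition rhs_sum (n : nat) : R :=
  - (3%:R / 4%:R) * \sum_(1 <= k < n.+1) ('C(2 * k, k)%:R * (-1) ^+ k / k%:R)
  - \sum_(0 <= k < n.+1) ('C(2 * k, k)%:R * (-1) ^+ k / (2 * k + 1)%:R).

Lemma rhs_sum_recurrence (n : nat) :
  rhs_sum n.+1 = rhs_sum n + (-1) ^+ n * step_term n.
Proof.
rewrite /rhs_sum /step_term !(big_nat_recr n.+1) //= exprS addn1.
field.
by rewrite nat1r -(natrM R 2) nat1r !natS_neq0.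
Qed.

Lemma wz_sum_closed_form (n : nat) : - (-1) ^+ n * wz_sum n = rhs_sum n.
Proof.
elim: n => [|n IH].
  by rewrite /wz_sum /rhs_sum /wz_summand !big_nat1 big_geq // bin0 expr0; ring.
have -> : wz_sum n.+1 = step_term n - wz_sum n.
  by rewrite -(wz_sum_recurrence n) addrK.
by rewrite rhs_sum_recurrence -IH exprS; ring.
Qed.

End BinomialQuotients.

Theorem mainTheorem11 (n : nat) :
  \sum_(0 <= k < n.+1)
      ('C(2 * n + 1, k)%:R * (-1) ^+ k / (k%:R - (2 * n + 1)%:R) : rat)
  = - (3%:R / 4%:R) *
      \sum_(1 <= k < n.+1) ('C(2 * k, k)%:R * (-1) ^+ k / k%:R : rat)
    - \sum_(0 <= k < n.+1) ('C(2 * k, k)%:R * (-1) ^+ k / (2 * k + 1)%:R : rat).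
Proof.
(* Reverse the denominators to expose the quotient sum A(2n+1, n). *)
have -> : \sum_(0 <= k < n.+1)
      ('C(2 * n + 1, k)%:R * (-1) ^+ k / (k%:R - (2 * n + 1)%:R) : rat)
  = - \sum_(0 <= k < n.+1)
      ('C((n + n).+1, k)%:R * (-1) ^+ k / ((n + n).+1%:R - k%:R) : rat).
  rewrite -sumrN; apply: eq_bigr => k _.
  by rewrite mul2n -addnn addn1 -[k%:R - _]opprB invrN mulrN.
rewrite alternating_binomial_quotient_sum.
by rewrite -[RHS]/(rhs_sum rat n) -wz_sum_closed_form /wz_sum /wz_summand mulNr.
Qed.
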